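(* If a set $S$ of sentences has a model, then there exists an alphabet that includes the original alphabet and an interpretation based on the expanded alphabet which is a separating model for $S$ (with respect to the expanded alphabet).
   Context: Setting: higher-order logic (Church's simple theory of types, without a description operator), with Henkin semantics: an interpretation $I$ for an alphabet consists of domains $D_\alpha$ for each type ($D_o=\{\mathsf T,\mathsf F\}$, $D_{\alpha\to\beta}$ a set of functions $D_\alpha\to D_\beta$) and a valuation of the constants of the alphabet (equality denoting identity) such that every term has a denotation; $V(t,I)$ is the denotation of a closed term $t$. Sentences are closed terms of type $o$; a model for a set of sentences is an interpretation in which each of them is true. An interpretation $I$ for an alphabet is separating if for every pair $r,s$ of closed terms of the same function type $\alpha\to\beta$ with $V(r,I)\neq V(s,I)$ there is a closed term $t$ of type $\alpha$ formed from symbols of that alphabet with $V((r\,t),I)\neq V((s\,t),I)$; a separating model is a separating interpretation that is a model. *)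

(* a deep embedding of Church's simple type theory
   (without description) with Henkin semantics. *)
From Stdlib Require Import List.
Import ListNotations.
Set Implicit Arguments.

(** Types: o (truth values), base types (indexed by nat, e.g. iota = Tb 0), arrows. *)
Inductive ty : Type :=
| To : ty
| Tb : nat -> ty
| Tarr : ty -> ty -> ty.

Inductive logc : Type :=
| LEq : ty -> logc
| LNeg : logc
| LOr : logc
| LPi : ty -> logc.

Definition ltype (l : logc) : ty :=
  match l with
  | LEq a => Tarr a (Tarr a To)
  | LNeg => Tarr To To
  | LOr => Tarr To (Tarr To To)
  | LPi a => Tarr (Tarr a To) To
  end.

Record alphabet : Type := Alphabet { sym : Type; styp : sym -> ty }.

Definition ext_alphabet (A : alphabet) (N : Type) (sigN : N -> ty) : alphabet :=
  {| sym := (sym A + N)%type;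
     styp := fun x => match x with inl c => styp A c | inr n => sigN n end |}.

Inductive var : list ty -> ty -> Type :=
| VZ : forall a G, var (a :: G) a
| VS : forall a b G, var G a -> var (b :: G) a.

Inductive tm (A : alphabet) : list ty -> ty -> Type :=
| tvar : forall G a, var G a -> tm A G a
| tcon : forall G (c : sym A), tm A G (styp A c)
| tlog : forall G (l : logc), tm A G (ltype l)
| tapp : forall G a b, tm A G (Tarr a b) -> tm A G a -> tm A G b
| tlam : forall G a b, tm A (a :: G) b -> tm A G (Tarr a b).

Arguments tvar {A G a}.
Arguments tcon {A G}.
Arguments tlog {A G}.
Arguments tapp {A G a b}.
Arguments tlam {A G a b}.

Definition closed (A : alphabet) (a : ty) := tm A [] a.
Definition sentence (A : alphabet) := tm A [] To.

Fixpoint lift (A : alphabet) (N : Type) (sigN : N -> ty) G a (t : tm A G a)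
  : tm (ext_alphabet A sigN) G a :=
  match t in tm _ G a return tm (ext_alphabet A sigN) G a with
  | tvar v => tvar v
  | tcon c => @tcon (ext_alphabet A sigN) _ (inl c)
  | tlog l => tlog l
  | tapp s u => tapp (lift sigN s) (lift sigN u)
  | tlam s => tlam (lift sigN s)
  end.

(** Henkin frames: D_o = bool (T/F), D_b arbitrary for base types, and D_{a->b}
    a set of functions D_a -> D_b, represented by an abstract carrier Dfun a b
    together with an injective ("extensional") application map into D_a -> D_b. *)
Definition Den_of (base : nat -> Type) (Dfun : ty -> ty -> Type) (t : ty) : Type :=
  match t with
  | To => bool
  | Tb n => base n
  | Tarr a b => Dfun a b
  end.

Record frame : Type := Frame {
  base : nat -> Type;
  Dfun : ty -> ty -> Type;
  app : forall a b, Dfun a b -> Den_of base Dfun a -> Den_of base Dfun b;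
  app_ext : forall a b (f g : Dfun a b), (forall x, app f x = app g x) -> f = g;
  dom_nonempty : forall t, inhabited (Den_of base Dfun t)
}.

Definition Den (F : frame) (t : ty) : Type := Den_of (base F) (Dfun F) t.

Definition appD (F : frame) (a b : ty) (f : Den F (Tarr a b)) (x : Den F a) : Den F b :=
  @app F a b f x.
Arguments appD {F a b} f x.

Fixpoint env (F : frame) (G : list ty) : Type :=
  match G with
  | [] => unit
  | a :: G' => (Den F a * env F G')%type
  end.

Fixpoint lookup (F : frame) G a (v : var G a) : env F G -> Den F a :=
  match v in var G a return env F G -> Den F a with
  | VZ _ _ => fun rho => fst rho
  | VS _ v' => fun rho => lookup F v' (snd rho)
  end.

Definition is_eval (A : alphabet) (F : frame) (cval : forall c : sym A, Den F (styp A c))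
  (ev : forall G a, tm A G a -> env F G -> Den F a) : Prop :=
  (forall G a (v : var G a) rho, ev G a (tvar v) rho = lookup F v rho) /\
  (forall G c rho, ev G _ (tcon c) rho = cval c) /\
  (forall G a rho (x y : Den F a),
      appD (appD (ev G _ (tlog (LEq a)) rho) x) y = true <-> x = y) /\
  (forall G rho (p : bool), appD (F:=F) (a:=To) (b:=To) (ev G _ (tlog LNeg) rho) p = negb p) /\
  (forall G rho (p q : bool),
      appD (F:=F) (a:=To) (b:=To)
        (appD (F:=F) (a:=To) (b:=Tarr To To) (ev G _ (tlog LOr) rho) p) q = orb p q) /\
  (forall G a rho (f : Den F (Tarr a To)),
      appD (ev G _ (tlog (LPi a)) rho) f = true <-> (forall x, appD f x = true)) /\
  (forall G a b (s : tm A G (Tarr a b)) (u : tm A G a) rho,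
      ev G b (tapp s u) rho = appD (ev G _ s rho) (ev G a u rho)) /\
  (forall G a b (s : tm A (a :: G) b) rho (x : Den F a),
      appD (ev G _ (tlam s) rho) x = ev (a :: G) b s (x, rho)).

Record interp (A : alphabet) : Type := Interp {
  ifr : frame;
  cval : forall c : sym A, Den ifr (styp A c);
  ev : forall G a, tm A G a -> env ifr G -> Den ifr a;
  ev_spec : @is_eval A ifr cval ev
}.

Definition V (A : alphabet) (I : interp A) a (t : closed A a) : Den (ifr I) a :=
  ev I t tt.

Definition is_model (A : alphabet) (I : interp A) (S : sentence A -> Prop) : Prop :=
  forall s, S s -> V I s = true.

Definition separating (A : alphabet) (I : interp A) : Prop :=
  forall a b (r s : closed A (Tarr a b)),
    V I r <> V I s ->
    exists t : closed A a, V I (tapp r t) <> V I (tapp s t).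

Definition separating_model (A : alphabet) (I : interp A) (S : sentence A -> Prop) : Prop :=
  separating I /\ is_model I S.

Definition lift_set (A : alphabet) (N : Type) (sigN : N -> ty) (S : sentence A -> Prop)
  : sentence (ext_alphabet A sigN) -> Prop :=
  fun s' => exists s, S s /\ s' = lift sigN s.
Arguments lift_set {A N} sigN S _.
Arguments lift {A N} sigN {G a} t.

From Stdlib Require Import List Classical Program.Equality.
Import ListNotations.
Set Implicit Arguments.

(* Given a model I, expand the alphabet by a constant c_x of type a for every
   element x of every domain D_a, interpreted as x itself.  The expansion is
   separating for trivial reasons: distinct functions f, g differ at some x,
   and then f c_x and g c_x denote different values.  The work lies in showing
   that the expansion is an interpretation at all, i.e. that every term over
   the expanded alphabet has a denotation: a term is translated into a term
   over the original alphabet by replacing each new constant c_x by a fresh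
   free variable, which is then evaluated by I in an environment sending that
   variable to x. *)

Fixpoint var_wkr (M : list ty) K a (v : var K a) : var (K ++ M) a :=
  match v in var K a return var (K ++ M) a with
  | VZ a G => VZ a (G ++ M)
  | @VS _ b _ v' => VS b (var_wkr M v')
  end.

Fixpoint var_wkl (K : list ty) M a (v : var M a) : var (K ++ M) a :=
  match K return var (K ++ M) a with
  | [] => v
  | b :: K' => VS b (var_wkl K' v)
  end.

Definition ren_up L L' (r : forall a, var L a -> var L' a) b
  : forall a, var (b :: L) a -> var (b :: L') a :=
  fun a v =>
  match v in var L0 a0 return
    match L0 with
    | [] => unit
    | b0 :: L1 => (forall a, var L1 a -> var L' a) -> var (b0 :: L') a0
    end
  with
  | VZ a G => fun _ => VZ a L'
  | @VS _ b G v' => fun r => VS b (r _ v')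
  end r.

Fixpoint ren_under (G : list ty) L L' (r : forall a, var L a -> var L' a)
  : forall a, var (G ++ L) a -> var (G ++ L') a :=
  match G return forall a, var (G ++ L) a -> var (G ++ L') a with
  | [] => r
  | b :: G' => @ren_up _ _ (ren_under G' r) b
  end.

Fixpoint ren (A : alphabet) L a (t : tm A L a)
  : forall L', (forall a, var L a -> var L' a) -> tm A L' a :=
  match t in tm _ L a return forall L', (forall a, var L a -> var L' a) -> tm A L' a with
  | tvar v => fun L' r => tvar (r _ v)
  | tcon c => fun L' r => tcon c
  | tlog l => fun L' r => tlog l
  | tapp s u => fun L' r => tapp (ren s r) (ren u r)
  | tlam s => fun L' r => tlam (ren s (@ren_up _ _ r _))
  end.

Fixpoint env_cat (F : frame) (G K : list ty) : env F G -> env F K -> env F (G ++ K) :=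
  match G return env F G -> env F K -> env F (G ++ K) with
  | [] => fun _ k => k
  | b :: G' => fun rho k => (fst rho, env_cat F G' K (snd rho) k)
  end.

Section Environments.
Variable F : frame.

Lemma lookup_var_wkr M K a (v : var K a) (k : env F K) (m : env F M) :
  lookup F (var_wkr M v) (env_cat F K M k m) = lookup F v k.
Proof. induction v; simpl; auto. Qed.

Lemma lookup_var_wkl K M a (v : var M a) (k : env F K) (m : env F M) :
  lookup F (var_wkl K v) (env_cat F K M k m) = lookup F v m.
Proof. induction K; simpl; auto. Qed.

Lemma lookup_ren_up L L' (r : forall a, var L a -> var L' a) b rho rho'
  (Hr : forall a (v : var L a), lookup F (r a v) rho' = lookup F v rho) (x : Den F b) :
  forall a (v : var (b :: L) a), lookup F (ren_up r v) (x, rho') = lookup F v (x, rho).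
Proof. intros a v; dependent destruction v; simpl; auto. Qed.

Lemma lookup_ren_under G L L' (r : forall a, var L a -> var L' a) k k'
  (Hr : forall a (v : var L a), lookup F (r a v) k' = lookup F v k) :
  forall (rho : env F G) a (v : var (G ++ L) a),
    lookup F (ren_under G r v) (env_cat F G L' rho k') = lookup F v (env_cat F G L rho k).
Proof.
  induction G as [|b G IH]; simpl; intros; auto.
  destruct rho as [x rho]; simpl.
  apply (@lookup_ren_up (G ++ L) (G ++ L') (ren_under G r) b
           (env_cat F G L rho k) (env_cat F G L' rho k')); auto.
Qed.

End Environments.

Lemma bool_eq_iff (b1 b2 : bool) (P : Prop) :
  (b1 = true <-> P) -> (b2 = true <-> P) -> b1 = b2.
Proof. destruct b1, b2; firstorder; symmetry; firstorder. Qed.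

Lemma appD_neq_ex {F : frame} {a b : ty} (f g : Den F (Tarr a b)) :
  f <> g -> exists x, appD f x <> appD g x.
Proof.
  intros Hfg; apply NNPP; intros Hno; apply Hfg, app_ext; intros x.
  apply NNPP; intros Hx; apply Hno; exists x; exact Hx.
Qed.

Section Evaluation.
Variables (A : alphabet) (I : interp A).

(* The equations of [is_eval] determine the logical constants up to
   extensionality, whatever the environment. *)
Lemma ev_tlog_env_indep G G' (l : logc) (rho : env (ifr I) G) (rho' : env (ifr I) G') :
  ev I (tlog l) rho = ev I (tlog l) rho'.
Proof.
  destruct (ev_spec I) as (_ & _ & Heq & Hneg & Hor & Hpi & _ & _).
  unfold appD in *.
  destruct l; simpl.
  - apply app_ext; intro x; apply app_ext; intro y.
    eapply bool_eq_iff; apply Heq.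
  - apply app_ext; intro x; rewrite !Hneg; reflexivity.
  - apply app_ext; intro x; apply app_ext; intro y; rewrite !Hor; reflexivity.
  - apply app_ext; intro f; eapply bool_eq_iff; apply Hpi.
Qed.

Lemma ev_ren L a (t : tm A L a) :
  forall L' (r : forall a, var L a -> var L' a) rho rho',
    (forall a (v : var L a), lookup _ (r a v) rho' = lookup _ v rho) ->
    ev I (ren t r) rho' = ev I t rho.
Proof.
  destruct (ev_spec I) as (Hvar & Hcon & _ & _ & _ & _ & Happ & Hlam).
  induction t as [G a v|G c|G l|G a b s IHs u IHu|G a b s IHs]; intros L' r rho rho' Hr;
    simpl.
  - rewrite !Hvar; auto.
  - rewrite !Hcon; reflexivity.
  - apply ev_tlog_env_indep.
  - rewrite !Happ; f_equal; eauto.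
  - apply app_ext; intro x.
    change (appD (ev I (tlam (ren s (@ren_up _ _ r _))) rho') x
            = appD (ev I (tlam s) rho) x).
    rewrite !Hlam; apply IHs; intros; apply lookup_ren_up; auto.
Qed.

End Evaluation.

Section ParameterExpansion.
Variables (A : alphabet) (I : interp A).

Definition param_alphabet : alphabet := ext_alphabet A (@projT1 ty (Den (ifr I))).

(* [elim_params t] is a term over [A] with extra free variables [K] replacing
   the new constants of [t], together with the values of those constants. *)
Fixpoint elim_params G a (t : tm param_alphabet G a)
  : {K : list ty & (tm A (G ++ K) a * env (ifr I) K)%type} :=
  match t in tm _ G a return {K : list ty & (tm A (G ++ K) a * env (ifr I) K)%type} with
  | @tvar _ G a v => existT _ [] (tvar (var_wkr [] v), tt)
  | @tcon _ G c =>
      match c return {K : list ty & (tm A (G ++ K) (styp param_alphabet c)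
                                     * env (ifr I) K)%type} with
      | inl c => existT _ [] (tcon c, tt)
      | inr (existT _ b x) => existT _ [b] (tvar (var_wkl G (VZ b [])), (x, tt))
      end
  | @tlog _ G l => existT _ [] (tlog l, tt)
  | @tapp _ G a b s u =>
      let (K1, p1) := elim_params s in
      let (K2, p2) := elim_params u in
      existT _ (K1 ++ K2)
        (tapp (ren (fst p1) (ren_under G (fun a (v : var K1 a) => var_wkr K2 v)))
              (ren (fst p2) (ren_under G (fun a (v : var K2 a) => var_wkl K1 v))),
         env_cat (ifr I) K1 K2 (snd p1) (snd p2))
  | @tlam _ G a b s =>
      let (K, p) := elim_params s in existT _ K (tlam (fst p), snd p)
  end.

Definition param_ev G a (t : tm param_alphabet G a) (rho : env (ifr I) G) : Den (ifr I) a :=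
  ev I (fst (projT2 (elim_params t)))
     (env_cat (ifr I) G _ rho (snd (projT2 (elim_params t)))).

Definition param_cval (c : sym param_alphabet) : Den (ifr I) (styp param_alphabet c) :=
  match c return Den (ifr I) (styp param_alphabet c) with
  | inl c => cval I c
  | inr x => projT2 x
  end.

Lemma param_ev_spec : is_eval (ifr I) param_cval param_ev.
Proof.
  destruct (ev_spec I) as (Hvar & Hcon & Heq & Hneg & Hor & Hpi & Happ & Hlam).
  unfold param_ev; repeat split; intros; simpl.
  - rewrite Hvar; apply lookup_var_wkr.
  - destruct c as [c | [b x]]; simpl.
    + apply Hcon.
    + rewrite Hvar; apply lookup_var_wkl.
  - simpl in H; now apply Heq in H.
  - now apply Heq.
  - apply Hneg.
  - apply Hor.
  - simpl in H; exact (proj1 (Hpi _ _ _ f) H x).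
  - now apply Hpi.
  - destruct (elim_params s) as [K1 [s' k1]], (elim_params u) as [K2 [u' k2]]; simpl.
    rewrite Happ; f_equal; apply ev_ren; intros; apply lookup_ren_under; intros;
      [apply lookup_var_wkr | apply lookup_var_wkl].
  - destruct (elim_params s) as [K [s' k]]; simpl.
    rewrite Hlam; reflexivity.
Qed.

Definition param_interp : interp param_alphabet := Interp param_ev_spec.

Lemma param_ev_lift G a (t : tm A G a) (rho : env (ifr I) G) :
  ev param_interp (lift _ t) rho = ev I t rho.
Proof.
  destruct (ev_spec I) as (Hvar & Hcon & _ & _ & _ & _ & Happ & Hlam).
  destruct (ev_spec param_interp) as (Hvar' & Hcon' & _ & _ & _ & _ & Happ' & Hlam').
  revert rho; induction t as [G a v|G c|G l|G a b s IHs u IHu|G a b s IHs]; intros rho;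
    cbn [lift].
  - rewrite Hvar, Hvar'; reflexivity.
  - rewrite Hcon; exact (Hcon' _ (inl c) rho).
  - simpl; unfold param_ev; simpl; apply ev_tlog_env_indep.
  - rewrite Happ, Happ', IHs, IHu; reflexivity.
  - apply app_ext; intro x; unfold appD in *.
    rewrite Hlam, Hlam'; apply IHs.
Qed.

Lemma param_interp_model (S : sentence A -> Prop) :
  is_model I S -> is_model param_interp (lift_set _ S).
Proof.
  intros HS s' [s [Hs ->]]; unfold V.
  rewrite param_ev_lift; exact (HS s Hs).
Qed.

Lemma param_interp_separating : separating param_interp.
Proof.
  destruct (ev_spec param_interp) as (_ & Hcon & _ & _ & _ & _ & Happ & _).
  intros a b r s Hrs.
  destruct (appD_neq_ex Hrs) as [x Hx].
  pose (c_x := @tcon param_alphabet [] (inr (existT _ a x))).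
  assert (Hc_x : ev param_interp c_x tt = x) by exact (Hcon [] _ tt).
  assert (Happ_x : forall u : closed param_alphabet (Tarr a b),
             V param_interp (tapp u c_x) = appD (V param_interp u) x).
  { intros u; unfold V; rewrite Happ; exact (f_equal (appD (ev param_interp u tt)) Hc_x). }
  exists c_x; rewrite !Happ_x; exact Hx.
Qed.

End ParameterExpansion.

Theorem mainTheorem17 (A : alphabet) (S : sentence A -> Prop) :
  (exists I : interp A, is_model I S) ->
  exists (N : Type) (sigN : N -> ty) (I' : interp (ext_alphabet A sigN)),
    separating_model I' (lift_set sigN S).
Proof.
  intros [I HI].
  exists {a : ty & Den (ifr I) a}, (@projT1 ty (Den (ifr I))), (param_interp I).
  split.
  - apply param_interp_separating.
  - now apply param_interp_model.
Qed.
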